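(* Let $n\ge1$, $k\in[n-1]$, $u,w\in S_n$, and $w_{0,n}=[n,n-1,\dots,1]$. Then $u\xrightarrow[k]{}w$ if and only if $w\,w_{0,n}\xrightarrow{n-k}u\,w_{0,n}$.
   Context: $S_n$ is the symmetric group on $[n]$, with $uv=u\circ v$; $\tau_{i,j}$ is the transposition of $i<j$; $\ell(u)$ is the number of inversions. For $k$, $u\lessdot_k u\tau_{i,j}$ means $i\le k<j$ and $\ell(u\tau_{i,j})=\ell(u)+1$. $u\xrightarrow{k}w$ means there is a chain $u=u_1\lessdot_k\cdots\lessdot_k u_s=w$ ($s\ge1$), $u_{t+1}=u_t\tau_{a_t,b_t}$, with $u_1(a_1)<u_2(a_2)<\cdots<u_{s-1}(a_{s-1})$; equivalently (Sottile) such a chain with $b_1,\dots,b_{s-1}$ pairwise distinct. $u\xrightarrow[k]{}w$ means there is a chain $u=u_1\lessdot_k\cdots\lessdot_k u_s=w$ with $u_{t+1}=u_t\tau_{a_t,b_t}$ and $a_1,\dots,a_{s-1}$ pairwise distinct. *)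

From mathcomp Require Import all_boot all_fingroup.
Set Implicit Arguments. Unset Strict Implicit. Unset Printing Implicit Defensive.

(* Permutations of [n] are modelled as {perm 'I_n}; position/value i in [n]
   (1-based) corresponds to the ordinal of value i-1.                       *)

Local Open Scope group_scope.

(* Paper's product uv = u o v.  MathComp's (u * v) x = v (u x), so u o v is v * u. *)
Definition pmul n (u v : {perm 'I_n}) : {perm 'I_n} := v * u.

Lemma pmulE n (u v : {perm 'I_n}) x : pmul u v x = u (v x).
Proof. by rewrite /pmul permM. Qed.

Definition swapR n (u : {perm 'I_n}) (a b : 'I_n) : {perm 'I_n} :=
  pmul u (tperm a b).

Definition inv_len n (u : {perm 'I_n}) : nat :=
  #|[set p : 'I_n * 'I_n | (p.1 < p.2)%N && (u p.2 < u p.1)%N]|.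

(* u <._k u tau_{a,b}:  a <= k < b (1-based), l(u tau) = l(u) + 1.
   With 0-based ordinals a, b this reads  a+1 <= k < b+1.                *)
Definition kcover n (k : nat) (u : {perm 'I_n}) (a b : 'I_n) : bool :=
  [&& (a < b)%N, (a.+1 <= k)%N, (k < b.+1)%N &
      inv_len (swapR u a b) == (inv_len u).+1].

(* A chain u = u_1 <._k ... <._k u_s, encoded by its list of steps (a_t, b_t). *)
Fixpoint kchain n (k : nat) (u : {perm 'I_n}) (s : seq ('I_n * 'I_n)) : bool :=
  if s is p :: s' then kcover k u p.1 p.2 && kchain k (swapR u p.1 p.2) s'
  else true.

Fixpoint chain_end n (u : {perm 'I_n}) (s : seq ('I_n * 'I_n)) : {perm 'I_n} :=
  if s is p :: s' then chain_end (swapR u p.1 p.2) s' else u.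

Fixpoint chain_vals n (u : {perm 'I_n}) (s : seq ('I_n * 'I_n)) : seq nat :=
  if s is p :: s' then (nat_of_ord (u p.1)) :: chain_vals (swapR u p.1 p.2) s'
  else [::].

Definition kbruhat_up n (k : nat) (u w : {perm 'I_n}) : Prop :=
  exists s : seq ('I_n * 'I_n),
    [/\ kchain k u s, chain_end u s = w & sorted ltn (chain_vals u s)].

Definition kbruhat_low n (k : nat) (u w : {perm 'I_n}) : Prop :=
  exists s : seq ('I_n * 'I_n),
    [/\ kchain k u s, chain_end u s = w & uniq (map fst s)].

Definition w0 n : {perm 'I_n} := perm (@rev_ord_inj n).

From mathcomp Require Import all_boot all_fingroup zify.
Set Implicit Arguments. Unset Strict Implicit. Unset Printing Implicit Defensive.

(* Right multiplication by w0 reverses positions, and l(v w0) = l(w0) - l(v);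
   hence v <._k v t_{a,b} iff (v t_{a,b}) w0 <._{n-k} v w0 via t_{n+1-b,n+1-a}.
   Reading a k-chain from u to w backwards therefore gives an (n-k)-chain from
   w w0 to u w0 whose step values u_t(a_t) come in reverse order.  It remains to
   see that a k-chain with distinct a_t exists iff one with strictly decreasing
   values exists.  Values at positions <= k only grow along a k-chain, so
   decreasing values force distinct a_t.  Conversely, two consecutive steps with
   distinct a's and increasing values can be exchanged without changing the
   endpoint, so insertion sort turns a chain with distinct a_t into one with
   decreasing values. *)

Lemma sum_pairs_split (T : finType) (F : T -> T -> nat) (a b : T) : a != b ->
  \sum_i \sum_j F i j = F a a + F b b + F a b + F b a +
   \sum_(c | (c != a) && (c != b)) (F a c + F c a + F b c + F c b) +
   \sum_(i | (i != a) && (i != b)) \sum_(j | (j != a) && (j != b)) F i j.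
Proof.
move=> ab.
have sum_split (G : T -> nat) :
    \sum_i G i = G a + G b + \sum_(i | (i != a) && (i != b)) G i.
  rewrite (bigD1 a) //= (bigD1 b) 1?eq_sym //= addnA.
  by congr (_ + _); apply: eq_bigl => i; rewrite andbC.
rewrite sum_split (sum_split (F a)) (sum_split (F b)).
under [X in _ + X = _]eq_bigr => i _ do rewrite sum_split.
rewrite !big_split /=; lia.
Qed.

Section KChains.
Variable n : nat.
Implicit Types (v : {perm 'I_n}) (a b c i j : 'I_n).

Lemma swapRE v a b x : swapR v a b x = v (tperm a b x).
Proof. by rewrite /swapR pmulE. Qed.

Lemma swapRK v a b : swapR (swapR v a b) a b = v.
Proof. by apply/permP => x; rewrite !swapRE tpermK. Qed.

Lemma swapR_if v a b c :
  swapR v a b c = if c == a then v b else if c == b then v a else v c.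
Proof.
rewrite swapRE; case: (c =P a) => [->|/eqP ca]; first by rewrite tpermL.
case: (c =P b) => [->|/eqP cb]; first by rewrite tpermR.
by rewrite tpermD // eq_sym.
Qed.

Definition inversion v i j : nat := ((i < j) && (v j < v i))%N.

Lemma inv_lenE v : inv_len v = \sum_i \sum_j inversion v i j.
Proof.
rewrite pair_big /= /inv_len -sum1_card big_mkcond /=.
by apply: eq_bigr => p _; rewrite inE /inversion; case: ifP.
Qed.

Definition between v a b c : bool := [&& a < c, c < b, v a < v c & v c < v b]%N.

Lemma inv_len_swapR v a b : (a < b)%N -> (v a < v b)%N ->
  inv_len (swapR v a b) =
    inv_len v + 1 + 2 * \sum_(c | (c != a) && (c != b)) between v a b c.
Proof.
move=> ab vab; have anb : a != b by rewrite neq_ltn ab.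
rewrite !inv_lenE !(sum_pairs_split _ anb).
have swap_out c : (c != a) && (c != b) -> swapR v a b c = v c.
  by rewrite swapR_if => /andP[/negbTE-> /negbTE->].
have -> : \sum_(i | (i != a) && (i != b)) \sum_(j | (j != a) && (j != b))
              inversion (swapR v a b) i j
        = \sum_(i | (i != a) && (i != b)) \sum_(j | (j != a) && (j != b)) inversion v i j.
  apply: eq_bigr => i /swap_out vi; apply: eq_bigr => j /swap_out vj.
  by rewrite /inversion vi vj.
have -> : \sum_(c | (c != a) && (c != b))
       (inversion (swapR v a b) a c + inversion (swapR v a b) c a
        + inversion (swapR v a b) b c + inversion (swapR v a b) c b)
   = \sum_(c | (c != a) && (c != b)) ((inversion v a c + inversion v c a
     + inversion v b c + inversion v c b) + 2 * between v a b c).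
  apply: eq_bigr => c /[dup] /swap_out vc /andP[ca cb].
  rewrite /inversion /between vc !swapR_if eqxx [b == a]eq_sym (negbTE anb) eqxx.
  have vca : v c != v a by rewrite (inj_eq perm_inj).
  have vcb : v c != v b by rewrite (inj_eq perm_inj).
  move: ca cb vca vcb; rewrite -!val_eqE /=.
  case: (ltngtP a c) => h1; case: (ltngtP b c) => h2;
  case: (ltngtP (v a) (v c)) => h3; case: (ltngtP (v b) (v c)) => h4 //=; lia.
rewrite big_split /= -big_distrr /= /inversion !swapR_if !eqxx [b == a]eq_sym (negbTE anb).
rewrite !ltnn ab vab.
rewrite ltnNge (ltnW ab) ltnNge (ltnW vab) /=; lia.
Qed.

Lemma inv_len_swapR_succ v a b : (a < b)%N ->
  (inv_len (swapR v a b) == (inv_len v).+1) =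
  (v a < v b)%N && [forall c, ~~ between v a b c].
Proof.
move=> ab; have anb : a != b by rewrite neq_ltn ab.
have vanb : (v a : nat) != v b by rewrite val_eqE (inj_eq perm_inj).
case: (ltngtP (v a) (v b)) vanb => // vab _; last first.
  have := @inv_len_swapR (swapR v a b) a b ab.
  rewrite swapRK !swapRE tpermL tpermR => /(_ vab) ->.
  by apply/negbTE; lia.
rewrite inv_len_swapR //=.
set S := \sum_(_ | _) _; transitivity (S == 0); first by apply/eqP/eqP; lia.
rewrite sum_nat_eq0; apply/forallP/forallP => between0 c.
  case: (boolP ((c != a) && (c != b))) => [cab|].
    by have := between0 c; rewrite cab; case: between.
  by rewrite negb_and !negbK /between => /orP[]/eqP->; rewrite ltnn ?andbF.
by apply/implyP => _; apply/eqP; case: between (between0 c).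
Qed.

Lemma kcoverP k v a b :
  reflect [/\ (a < b)%N, (a < k)%N, (k <= b)%N, (v a < v b)%N &
              forall c, (a < c)%N -> (c < b)%N -> ~~ ((v a < v c) && (v c < v b))%N]
          (kcover k v a b).
Proof.
apply: (iffP and4P) => [[ab ak kb]|[ab ak kb vab nobetween]].
  rewrite inv_len_swapR_succ // => /andP[vab /forallP nobetween].
  by split => // c ac cb; have := nobetween c; rewrite /between ac cb.
split => //; rewrite inv_len_swapR_succ // vab; apply/forallP => c.
by apply/and4P => -[ac cb vac vcb]; have := nobetween c ac cb; rewrite vac vcb.
Qed.

Lemma swapRC v a b a' b' : a != a' -> a != b' -> b != a' -> b != b' ->
  swapR (swapR v a b) a' b' = swapR (swapR v a' b') a b.
Proof.
move=> aa' ab' ba' bb'.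
have tpermC2 : commute (tperm a b) (tperm a' b').
  by apply/commgP/conjg_fixP; rewrite tpermJ !tpermD // eq_sym.
by rewrite /swapR /pmul !mulgA tpermC2.
Qed.

Lemma kcover_exchange k v a b a' b' :
  kcover k v a b -> kcover k (swapR v a b) a' b' -> a != a' -> (v a < v a')%N ->
  [/\ kcover k v a' b', kcover k (swapR v a' b') a b &
      swapR (swapR v a' b') a b = swapR (swapR v a b) a' b'].
Proof.
move=> /kcoverP[ab ak kb vab gap] /kcoverP[ab' ak' kb' vab' gap'] aa' va.
have anb : a != b by rewrite neq_ltn ab.
have a'b : a' != b by rewrite neq_ltn (leq_trans ak' kb).
have ab'n : a != b' by rewrite neq_ltn (leq_trans ak kb').
have swap_a' : swapR v a b a' = v a' by rewrite swapR_if eq_sym (negbTE aa') (negbTE a'b).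
have bb' : b != b'.
  apply: contraTneq vab' => <-.
  by rewrite swap_a' swapR_if eq_sym (negbTE anb) eqxx -leqNgt ltnW.
have swap_b' : swapR v a b b' = v b'.
  by rewrite swapR_if eq_sym (negbTE ab'n) eq_sym (negbTE bb').
rewrite swap_a' swap_b' in vab' gap'.
have gap'_out c : (a' < c)%N -> (c < b')%N -> c != a -> c != b ->
    ~~ ((v a' < v c) && (v c < v b'))%N.
  move=> a'c cb' ca cb; have := gap' c a'c cb'.
  by rewrite swapR_if (negbTE ca) (negbTE cb).
have gap'_a : (a' < a)%N -> ~~ ((v a' < v b) && (v b < v b'))%N.
  by move=> a'a; have := gap' a a'a (leq_trans ak kb'); rewrite swapR_if eqxx.
have vb_lt_va' : (a < a')%N -> (v b < v a')%N.
  move=> lt_aa'; have := gap a' lt_aa' (leq_trans ak' kb); rewrite va /= -leqNgt.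
  by rewrite leq_eqVlt val_eqE (inj_eq perm_inj) eq_sym (negbTE a'b).
have a'_vs_a : (a < a')%N \/ (a' < a)%N.
  by case: (ltngtP a a') => [||/val_inj eq_aa']; [left|right|rewrite eq_aa' eqxx in aa'].
split.
- apply/kcoverP; split => // c a'c cb'.
  case: (c =P a) => [->|/eqP ca]; first by rewrite ltnNge (ltnW va).
  case: (c =P b) => [->|/eqP cb]; last exact: gap'_out.
  by case: a'_vs_a => [/vb_lt_va'|/gap'_a //]; lia.
- have [swap'_a swap'_b] : swapR v a' b' a = v a /\ swapR v a' b' b = v b.
    rewrite !swapR_if (negbTE aa') (negbTE ab'n) [b == a']eq_sym.
    by rewrite (negbTE a'b) (negbTE bb').
  apply/kcoverP; rewrite swap'_a swap'_b; split => // c ac cb; rewrite swapR_if.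
  case: (c =P a') ac cb => [-> ac cb|/eqP ca' ac cb].
    by have := vb_lt_va' ac; lia.
  case: (c =P b') ac cb => [-> ac cb|/eqP cb' ac cb]; last exact: gap.
  case: a'_vs_a => [/vb_lt_va'|/gap'_a]; first by lia.
  have vb'b : v b' != v b :> nat by rewrite val_eqE (inj_eq perm_inj) eq_sym.
  by have := gap b' ac cb; lia.
- by apply/esym/swapRC; rewrite // eq_sym.
Qed.

(* One insertion-sort step: the first step is moved past every later step of
   larger value by [kcover_exchange]. *)
Lemma kchain_insert k v p rest m :
  kchain k v (p :: rest) -> p.1 \notin map fst rest -> (v p.1 < m)%N ->
  path gtn m (chain_vals (swapR v p.1 p.2) rest) ->
  exists s, [/\ kchain k v s, chain_end v s = chain_end v (p :: rest),
     path gtn m (chain_vals v s) & perm_eq (map fst s) (p.1 :: map fst rest)].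
Proof.
elim: rest v p m => [|q rest IH] v p m /andP[Hp Hc] Hnotin vpm Hpath.
  by exists [:: p]; rewrite /= Hp vpm.
case/andP: Hc => Hq; rewrite -/kchain => Hc.
move: Hnotin Hpath; rewrite inE negb_or => /andP[pq Hnotin] /andP[mq Hpath].
have /kcoverP[_ qk _ _ _] := Hq; have /kcoverP[_ pk kp _ _] := Hp.
have swap_q : swapR v p.1 p.2 q.1 = v q.1.
  have qp2 : q.1 != p.2 by rewrite neq_ltn (leq_trans qk kp).
  by rewrite swapR_if eq_sym (negbTE pq) (negbTE qp2).
have vpq : v p.1 != v q.1 :> nat by rewrite val_eqE (inj_eq perm_inj).
rewrite swap_q in mq Hpath.
case: (ltngtP (v p.1) (v q.1)) vpq => // vpq _; last first.
  by exists [:: p, q & rest]; rewrite /= Hp Hq Hc vpm swap_q vpq.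
have [Hq' Hp' Eend] := kcover_exchange Hp Hq pq vpq.
have swap_p : swapR v q.1 q.2 p.1 = v p.1.
  have /kcoverP[_ _ kq _ _] := Hq.
  have pq2 : p.1 != q.2 by rewrite neq_ltn (leq_trans pk kq).
  by rewrite swapR_if (negbTE pq) (negbTE pq2).
have [||||s [S1 S2 S3 S4]] := IH (swapR v q.1 q.2) p (v q.1) => //.
- by rewrite /= Hp' Eend.
- by rewrite swap_p.
- by rewrite Eend.
exists (q :: s); split => /=.
- by rewrite Hq'.
- by rewrite S2 /= Eend.
- by apply/andP; split.
- rewrite -(perm_cons q.1) in S4; apply: perm_trans S4 _.
  by rewrite (perm_catCA [:: q.1] [:: p.1]).
Qed.

Lemma sorted_gtn_chain_vals v s :
  sorted gtn (chain_vals v s) = path gtn n (chain_vals v s).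
Proof. by case: s => //= p s; rewrite -[X in X && _]/(_ < n)%N ltn_ord. Qed.

Lemma kchain_sort k v s : kchain k v s -> uniq (map fst s) ->
  exists s', [/\ kchain k v s', chain_end v s' = chain_end v s,
     sorted gtn (chain_vals v s') & perm_eq (map fst s') (map fst s)].
Proof.
elim: s v => [|p rest IH] v; first by exists [::].
case/andP => Hp Hc /andP[Hnotin Huniq].
have [r [R1 R2 R3 R4]] := IH _ Hc Huniq.
have [||||s [S1 S2 S3 S4]] := @kchain_insert k v p r n.
- by rewrite /= Hp.
- by rewrite (perm_mem R4).
- exact: ltn_ord.
- by rewrite -sorted_gtn_chain_vals.
exists s; split; rewrite ?sorted_gtn_chain_vals //; first by rewrite S2 /= R2.
by apply: perm_trans S4 _; rewrite perm_cons.
Qed.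

Lemma kcover_swapR_le k v a b i : kcover k v a b -> (i < k)%N ->
  (v i <= swapR v a b i)%N.
Proof.
case/kcoverP => _ _ kb vab _ ik; rewrite swapR_if.
case: (i =P a) => [->|_]; first exact: ltnW.
by case: (i =P b) => [eib|//]; rewrite eib in ik; have := leq_trans ik kb; rewrite ltnn.
Qed.

Lemma kchain_fst_lt k v s q : kchain k v s -> q \in s -> (q.1 < k)%N.
Proof.
elim: s v => [|p s IH] v; first by rewrite in_nil.
case/andP => Hp Hc; rewrite inE => /orP[/eqP->|]; last exact: IH Hc.
by case/kcoverP: Hp.
Qed.

Lemma kchain_vals_bound k v s m q : kchain k v s -> path gtn m (chain_vals v s) ->
  q \in s -> (v q.1 < m)%N.
Proof.
elim: s v m => [|p s IH] v m; first by rewrite in_nil.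
case/andP => Hp Hc /andP[vpm Hpath]; rewrite inE => /orP[/eqP-> //|qs].
apply: leq_ltn_trans (kcover_swapR_le Hp (kchain_fst_lt Hc qs)) _.
exact: ltn_trans (IH _ _ Hc Hpath qs) vpm.
Qed.

Lemma kchain_sorted_gtn_uniq k v s : kchain k v s -> sorted gtn (chain_vals v s) ->
  uniq (map fst s).
Proof.
rewrite sorted_gtn_chain_vals.
suff decreasing_uniq m : kchain k v s -> path gtn m (chain_vals v s) -> uniq (map fst s).
  exact: decreasing_uniq.
elim: s v m => [|p s IH] v m //= /andP[Hp Hc] /andP[_ Hpath].
rewrite (IH _ _ Hc Hpath) andbT; apply/mapP => -[q qs eq_pq].
have := kchain_vals_bound Hc Hpath qs; rewrite -eq_pq swapR_if eqxx.
by case/kcoverP: Hp => _ _ _ vab _; rewrite ltnNge (ltnW vab).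
Qed.

Local Notation rev_perm v := (pmul v (w0 n)).

Definition rev_step (p : 'I_n * 'I_n) := (rev_ord p.2, rev_ord p.1).

Lemma rev_permE v x : rev_perm v x = v (rev_ord x).
Proof. by rewrite pmulE /w0 permE. Qed.

Lemma rev_permK v : rev_perm (rev_perm v) = v.
Proof. by apply/permP => x; rewrite !rev_permE rev_ordK. Qed.

Lemma rev_perm_swapR v a b :
  rev_perm (swapR v a b) = swapR (rev_perm v) (rev_ord b) (rev_ord a).
Proof.
apply/permP => x; rewrite rev_permE !swapRE rev_permE; congr (v _).
case: (tpermP (rev_ord b) (rev_ord a) x) => [->|->|xb xa].
- by rewrite !rev_ordK tpermR.
- by rewrite !rev_ordK tpermL.
- by rewrite tpermD //; apply/eqP => E; [apply: xa | apply: xb]; rewrite E rev_ordK.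
Qed.

Lemma inv_len_rev_perm v :
  inv_len (rev_perm v) + inv_len v = \sum_(i : 'I_n) \sum_(j : 'I_n) ((i < j)%N : nat).
Proof.
rewrite !inv_lenE !pair_big /= (reindex_inj (h := rev_step)); last first.
  by apply: (can_inj (g := rev_step)) => -[x y]; rewrite /rev_step /= !rev_ordK.
rewrite -big_split /=; apply: eq_bigr => -[i j] _.
rewrite /inversion /= !rev_permE !rev_ordK.
have vij : (i : nat) != j -> (v i : nat) != v j by rewrite !val_eqE (inj_eq perm_inj).
case: (ltngtP i j) vij => [ij|ji|/val_inj->]; last by rewrite !ltnn.
- have -> : (n - j.+1 < n - i.+1)%N by have := ltn_ord j; lia.
  by move=> /(_ isT); case: ltngtP.
- by have -> : (n - j.+1 < n - i.+1)%N = false by apply/negbTE; have := ltn_ord i; lia.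
Qed.

Lemma kcover_rev_perm k v a b : kcover k v a b ->
  kcover (n - k) (rev_perm (swapR v a b)) (rev_ord b) (rev_ord a).
Proof.
case/and4P => ab ak kb /eqP cover_len.
have rev_len := inv_len_rev_perm v; have rev_len' := inv_len_rev_perm (swapR v a b).
have swap_back : swapR (rev_perm (swapR v a b)) (rev_ord b) (rev_ord a) = rev_perm v.
  by rewrite -rev_perm_swapR swapRK.
apply/and4P; split => /=; rewrite ?swap_back; have := ltn_ord b; lia.
Qed.

Lemma kchain_rcons k v s p :
  kchain k v (rcons s p) = kchain k v s && kcover k (chain_end v s) p.1 p.2.
Proof. by elim: s v => [|q s IH] v /=; rewrite ?andbT // IH andbA. Qed.

Lemma chain_end_rcons v s p : chain_end v (rcons s p) = swapR (chain_end v s) p.1 p.2.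
Proof. by elim: s v => [|q s IH] v /=. Qed.

Lemma chain_vals_rcons v s p :
  chain_vals v (rcons s p) = rcons (chain_vals v s) (nat_of_ord (chain_end v s p.1)).
Proof. by elim: s v => [|q s IH] v /=; rewrite ?IH. Qed.

Lemma kchain_rev_perm k v s : kchain k v s ->
  let s' := rev (map rev_step s) in
  [/\ kchain (n - k) (rev_perm (chain_end v s)) s',
      chain_end (rev_perm (chain_end v s)) s' = rev_perm v &
      chain_vals (rev_perm (chain_end v s)) s' = rev (chain_vals v s)].
Proof.
elim: s v => [|p s IH] v //= /andP[Hp /IH[Hc Hend Hvals]].
rewrite !rev_cons kchain_rcons chain_end_rcons chain_vals_rcons Hc Hend Hvals /=.
split; first exact: kcover_rev_perm.
- by rewrite -rev_perm_swapR swapRK.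
- by rewrite rev_permE rev_ordK swapR_if eqxx; case: eqP => [->|].
Qed.

End KChains.

Theorem lemma2p31 (n k : nat) (u w : {perm 'I_n}) :
  (1 <= n)%N -> (1 <= k)%N -> (k <= n - 1)%N ->
  (kbruhat_low k u w <-> kbruhat_up (n - k) (pmul w (w0 n)) (pmul u (w0 n))).
Proof.
move=> _ _ kn; split.
- case=> s [Hc <- Huniq].
  have [s' [Hc' Hend Hsorted _]] := kchain_sort Hc Huniq.
  have [Rc Rend Rvals] := kchain_rev_perm Hc'.
  exists (rev (map (@rev_step n) s')); rewrite -Hend; split => //.
  by rewrite Rvals rev_sorted.
- case=> s [Hc Hend Hsorted].
  have [Rc Rend Rvals] := kchain_rev_perm Hc.
  have nk : n - (n - k) = k by rewrite subKn // (leq_trans kn (leq_subr 1 n)).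
  rewrite Hend nk !rev_permK in Rc Rend Rvals.
  exists (rev (map (@rev_step n) s)); split => //.
  by apply: kchain_sorted_gtn_uniq Rc _; rewrite Rvals rev_sorted.
Qed.
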